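(* There is a constant $C>0$ such that for all $a\neq b$ in $\mathbb{R}/\tau\mathbb{Z}$ with $0\notin Z(a,b)$, $$\sum_{n\in Z(a,b)}\frac1{|n|^3}\le C\,\frac{\sum_{n\in Z(a,b)}\frac1{|n|^5}}{\sum_{n\in Z(a,b)}\frac1{n^2}}.$$
   Context: $\tau=\frac{1+\sqrt5}{2}$. For real $x$, $x\bmod\tau$ is its image in $\mathbb{R}/\tau\mathbb{Z}$. For $a,b\in\mathbb{R}/\tau\mathbb{Z}$, $(a,b)$ denotes the open arc from $a$ to $b$ in the positive direction, and $Z(a,b)$ is the set of integers $n$ with $n\bmod\tau\in(a,b)$. The constant $C$ is independent of all variables. *)

From Stdlib Require Import Reals.
From Coquelicot Require Import Coquelicot.
Open Scope R_scope.

Definition tau : R := (1 + sqrt 5) / 2.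

Definition modt (x : R) : R := x - tau * IZR (Int_part (x / tau)).

(* t mod tau lies in the open arc from a to b (positive direction) of R/tauZ *)
Definition in_arc (a b t : R) : Prop :=
  0 < modt (t - a) /\ modt (t - a) < modt (b - a).

Definition inZ (a b : R) (n : Z) : Prop := in_arc a b (IZR n).

Definition termZ (k : nat) (a b : R) (n : Z) : R :=
  match Rlt_dec 0 (modt (IZR n - a)) with
  | left _ => match Rlt_dec (modt (IZR n - a)) (modt (b - a)) with
              | left _ => / (Rabs (IZR n)) ^ k
              | right _ => 0
              end
  | right _ => 0
  end.

(* sum over n \in Z(a,b) \ {0} of 1/|n|^k, as the series over m >= 1 of the
   terms for n = m and n = -m (all terms nonnegative). *)
Definition sumZ (k : nat) (a b : R) : R :=
  Series (fun m : nat => termZ k a b (Z.of_nat (S m)) + termZ k a b (- Z.of_nat (S m))%Z).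

(** Let [L = modt (b - a)] be the length of the arc.  If [n <> n'] both lie in
    [Z(a,b)], then [|k - tau q| < L] for [k = n - n'] and some integer [q]; the norm
    [k^2 - k q - q^2] of [k - tau q] in [Z[tau]] is a nonzero integer while its
    conjugate [k - (1 - tau) q] is at most [2|k|], so [|n - n'| > 1 / (2L)].
    Conversely, writing the midpoint of the arc in the basis of two consecutive
    Fibonacci approximations [F_(j+1) - tau F_j = (1 - tau)^j] yields an [n] in
    [Z(a,b)] with [|n| <= 2 tau^4 / L].  Hence, if [m] is the least [|n|] over [Z(a,b)],
    the elements of [Z(a,b)] on each side of [0] are at least [m / (4 tau^4)] apart,
    and comparison with a telescoping sum gives [sum 1/n^2 = O(1/m^2)] and
    [sum 1/|n|^3 = O(1/m^3)], whereas [sum 1/n^2 >= 1/m^2] and [sum 1/|n|^5 >= 1/m^5]. *)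

From Stdlib Require Import Reals Lra Lia Psatz ZArith Classical.
From Coquelicot Require Import Coquelicot.
Open Scope R_scope.

Lemma tau_sqr : tau * tau = tau + 1.
Proof.
  unfold tau. pose proof (sqrt_sqrt 5 ltac:(lra)). nra.
Qed.

Lemma tau_bounds : 1.6 < tau < 1.65.
Proof.
  unfold tau. pose proof (sqrt_sqrt 5 ltac:(lra)). pose proof (sqrt_pos 5).
  assert (2.2 < sqrt 5 < 2.3) by nra. lra.
Qed.

Lemma modt_eq x q : 0 <= x - tau * IZR q < tau -> modt x = x - tau * IZR q.
Proof.
  intros Hq. pose proof tau_bounds.
  set (f := (x - tau * IZR q) / tau).
  assert (Hf : 0 <= f < 1).
  { unfold f. split; [apply Rdiv_le_0_compat; lra|].
    apply (Rmult_lt_reg_r tau); [lra|]. field_simplify; lra. }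
  assert (Hx : x / tau = IZR q + f) by (unfold f; field; lra).
  destruct (Int_part_frac_part_spec (x / tau) q f Hf Hx) as [Hq' _].
  unfold modt. rewrite <- Hq'. reflexivity.
Qed.

Lemma modt_range x : 0 <= modt x < tau.
Proof.
  pose proof tau_bounds. unfold modt.
  destruct (base_Int_part (x / tau)) as [H1 H2].
  assert (x = tau * (x / tau)) by (field; lra).
  split; nra.
Qed.

Lemma modt_shift x q : modt (x + tau * IZR q) = modt x.
Proof.
  pose proof (modt_range x) as Hx.
  rewrite (modt_eq _ (Int_part (x / tau) + q)); unfold modt in *; rewrite plus_IZR.
  - ring.
  - lra.
Qed.

Lemma modt_sub_pos a b : modt a <> modt b -> 0 < modt (b - a).
Proof.
  intros Hab. destruct (modt_range (b - a)) as [[Hpos|Hzero] _]; [exact Hpos|].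
  exfalso. apply Hab. unfold modt in Hzero.
  replace b with (a + tau * IZR (Int_part ((b - a) / tau))) by lra.
  apply eq_sym, modt_shift.
Qed.

Lemma Rabs_IZR_ge_1 k : k <> 0%Z -> 1 <= Rabs (IZR k).
Proof. intros. rewrite <- abs_IZR. apply IZR_le. lia. Qed.

Lemma golden_norm_neq0 k q : k <> 0%Z -> (k * k - k * q - q * q <> 0)%Z.
Proof.
  (* The form is odd unless [k] and [q] are both even; then descend to [k/2, q/2]. *)
  remember (Z.abs_nat k) as n eqn:Hn. revert k q Hn.
  induction n as [n IH] using lt_wf_ind. intros k q -> Hk Hkq.
  destruct (Z.Even_or_Odd k) as [[k' ->]|[k' ->]];
  destruct (Z.Even_or_Odd q) as [[q' ->]|[q' ->]]; try nia.
  apply (IH (Z.abs_nat k') ltac:(lia) k' q' eq_refl ltac:(lia)). nia.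
Qed.

Lemma golden_approx k q : k <> 0%Z -> Rabs (IZR k - tau * IZR q) <= tau ->
  1 <= 2 * Rabs (IZR k) * Rabs (IZR k - tau * IZR q).
Proof.
  intros Hk Hx. pose proof tau_sqr as Ht2. pose proof tau_bounds as Ht.
  set (x := IZR k - tau * IZR q) in *.
  (* the Galois conjugate of [x], obtained by replacing [tau] with [1 - tau] *)
  set (z := IZR k - IZR q + tau * IZR q).
  assert (Hnorm : 1 <= Rabs x * Rabs z).
  { rewrite <- Rabs_mult.
    replace (x * z) with (IZR (k * k - k * q - q * q)).
    - apply Rabs_IZR_ge_1, golden_norm_neq0, Hk.
    - rewrite !minus_IZR, !mult_IZR. unfold x, z.
      assert (IZR q * IZR q * (tau * tau) = IZR q * IZR q * (tau + 1)) by (rewrite Ht2; ring).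
      lra. }
  assert (Hz : z = (3 - tau) * IZR k - (2 - tau) * x).
  { unfold z, x.
    assert (IZR q * (tau * tau) = IZR q * (tau + 1)) by (rewrite Ht2; ring). lra. }
  assert (Hk1 := Rabs_IZR_ge_1 k Hk).
  assert (Hzk : Rabs z <= 2 * Rabs (IZR k)).
  { rewrite Hz. unfold Rminus. eapply Rle_trans; [apply Rabs_triang|].
    rewrite Rabs_Ropp, !Rabs_mult, (Rabs_pos_eq (3 + - tau)), (Rabs_pos_eq (2 + - tau)) by lra.
    nra. }
  pose proof (Rabs_pos x). nra.
Qed.

Lemma inZ_spacing a b n n' : inZ a b n -> inZ a b n' -> n <> n' ->
  1 < 2 * modt (b - a) * Rabs (IZR (n - n')).
Proof.
  unfold inZ, in_arc. intros [H1 H2] [H3 H4] Hn.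
  set (L := modt (b - a)) in *.
  assert (HL : L < tau) by apply modt_range.
  unfold modt in H1, H2, H3, H4.
  set (q := Int_part ((IZR n - a) / tau)) in *.
  set (q' := Int_part ((IZR n' - a) / tau)) in *.
  assert (Hx : Rabs (IZR (n - n') - tau * IZR (q - q')) < L)
    by (rewrite !minus_IZR; apply Rabs_def1; lra).
  assert (Hk : (n - n' <> 0)%Z) by lia.
  pose proof (golden_approx (n - n') (q - q') Hk ltac:(lra)).
  pose proof (Rabs_IZR_ge_1 _ Hk). nra.
Qed.

Lemma Rabs_frac_comb_le e1 e2 u v : 0 <= e1 <= 1 -> 0 <= e2 <= 1 ->
  Rabs (e1 * u + e2 * v) <= Rabs u + Rabs v.
Proof.
  intros He1 He2. eapply Rle_trans; [apply Rabs_triang|].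
  rewrite !Rabs_mult, (Rabs_pos_eq e1), (Rabs_pos_eq e2) by lra.
  pose proof (Rabs_pos u). pose proof (Rabs_pos v). nra.
Qed.

Lemma lattice_point_near p1 p2 d1 d2 c : p1 * d2 - p2 * d1 <> 0 ->
  exists s t : Z,
    Rabs (IZR s * p1 + IZR t * p2) <= Rabs p1 + Rabs p2 /\
    Rabs (IZR s * d1 + IZR t * d2 - c) <= Rabs d1 + Rabs d2.
Proof.
  intros HD.
  set (x := - p2 * c / (p1 * d2 - p2 * d1)). set (y := p1 * c / (p1 * d2 - p2 * d1)).
  assert (Hp : x * p1 + y * p2 = 0) by (unfold x, y; field; exact HD).
  assert (Hd : x * d1 + y * d2 = c) by (unfold x, y; field; exact HD).
  exists (Int_part x), (Int_part y).
  destruct (base_Int_part x), (base_Int_part y).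
  set (e1 := x - IZR (Int_part x)). set (e2 := y - IZR (Int_part y)).
  replace (IZR (Int_part x)) with (x - e1) by (unfold e1; ring).
  replace (IZR (Int_part y)) with (y - e2) by (unfold e2; ring).
  split.
  - replace ((x - e1) * p1 + (y - e2) * p2) with (- (e1 * p1 + e2 * p2)) by lra.
    rewrite Rabs_Ropp. apply Rabs_frac_comb_le; unfold e1, e2; lra.
  - replace ((x - e1) * d1 + (y - e2) * d2 - c) with (- (e1 * d1 + e2 * d2)) by lra.
    rewrite Rabs_Ropp. apply Rabs_frac_comb_le; unfold e1, e2; lra.
Qed.

Fixpoint fib_pair (j : nat) : Z * Z :=
  match j with
  | O => (1%Z, 0%Z)
  | S j => ((fst (fib_pair j) + snd (fib_pair j))%Z, fst (fib_pair j))
  end.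

Lemma fib_pair_approx j :
  IZR (fst (fib_pair j)) - tau * IZR (snd (fib_pair j)) = (1 - tau) ^ j.
Proof.
  induction j as [|j IH]; simpl; [lra|].
  rewrite plus_IZR, <- IH.
  set (A := IZR (fst (fib_pair j))). set (B := IZR (snd (fib_pair j))).
  assert (B * (tau * tau) = B * (tau + 1)) by (rewrite tau_sqr; ring).
  lra.
Qed.

Lemma fib_pair_bound j : 1 <= IZR (fst (fib_pair j)) <= tau ^ j.
Proof.
  enough (H : 1 <= IZR (fst (fib_pair j)) <= tau ^ j /\
              0 <= tau * IZR (snd (fib_pair j)) <= tau ^ j) by apply H.
  pose proof tau_sqr. pose proof tau_bounds.
  induction j as [|j IH]; simpl; [lra|].
  rewrite plus_IZR.
  set (A := IZR (fst (fib_pair j))) in *. set (B := IZR (snd (fib_pair j))) in *.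
  set (P := tau ^ j) in *.
  assert (0 <= B) by nra.
  assert (tau * (A + B) <= tau * (tau * P)) by nra.
  nra.
Qed.

Lemma fib_pair_sum_le j :
  IZR (fst (fib_pair (S (S (S j))))) + IZR (fst (fib_pair (S (S j)))) <= tau ^ 4 * tau ^ j.
Proof.
  destruct (fib_pair_bound (S (S (S j)))) as [_ H1].
  destruct (fib_pair_bound (S (S j))) as [_ H2].
  change (tau ^ S (S (S j))) with (tau * (tau * (tau * tau ^ j))) in H1.
  change (tau ^ S (S j)) with (tau * (tau * tau ^ j)) in H2.
  set (P := tau ^ j) in *.
  replace (tau ^ 4 * P)
    with (tau * (tau * (tau * P)) + tau * (tau * P) - tau * tau * P * (tau + 1 - tau * tau))
    by ring.
  rewrite tau_sqr. lra.
Qed.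

Lemma exists_pow_tau_between x : 1 <= x -> exists j, tau ^ j <= x < tau ^ S j.
Proof.
  intros Hx. pose proof tau_bounds.
  destruct (Pow_x_infinity tau ltac:(rewrite Rabs_pos_eq; lra) (x + 1)) as [N HN].
  specialize (HN N (Nat.le_refl N)). rewrite Rabs_pos_eq in HN by (apply pow_le; lra).
  assert (HxN : x < tau ^ N) by lra. clear HN.
  induction N as [|N IH]; [simpl in HxN; lra|].
  destruct (Rlt_or_le x (tau ^ N)) as [Hlt|Hle]; [exact (IH Hlt)|].
  exists N. split; assumption.
Qed.

Lemma pow_tau_inv j : (tau - 1) ^ j * tau ^ j = 1.
Proof.
  rewrite <- Rpow_mult_distr. replace ((tau - 1) * tau) with 1 by (pose proof tau_sqr; lra).
  apply pow1.
Qed.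

Lemma one_sub_tau_pow_sum j :
  Rabs ((1 - tau) ^ S (S (S j))) + Rabs ((1 - tau) ^ S (S j)) = / tau ^ S j.
Proof.
  pose proof tau_bounds.
  rewrite <- !RPow_abs, (Rabs_left (1 - tau)) by lra.
  replace (- (1 - tau)) with (tau - 1) by ring.
  pose proof (pow_tau_inv (S j)) as Hinv.
  change ((tau - 1) ^ S (S (S j))) with ((tau - 1) * ((tau - 1) * (tau - 1) ^ S j)).
  change ((tau - 1) ^ S (S j)) with ((tau - 1) * (tau - 1) ^ S j).
  set (w := (tau - 1) ^ S j) in *.
  replace ((tau - 1) * ((tau - 1) * w) + (tau - 1) * w) with (w * (tau * tau - tau)) by ring.
  rewrite tau_sqr.
  assert (Hnz : tau ^ S j <> 0) by (apply pow_nonzero; lra).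
  apply (Rmult_eq_reg_r (tau ^ S j)); [|exact Hnz].
  rewrite Rinv_l by exact Hnz.
  transitivity (w * tau ^ S j); [ring|exact Hinv].
Qed.

Definition cover_const : R := 2 * tau ^ 4.

Lemma inZ_exists_small a b : 0 < modt (b - a) ->
  exists n, inZ a b n /\ Rabs (IZR n) <= cover_const / modt (b - a).
Proof.
  intros HL. set (L := modt (b - a)) in *.
  assert (HLt : L < tau) by apply modt_range.
  pose proof tau_bounds as Ht.
  destruct (exists_pow_tau_between (2 / L)) as [j [Hj_le Hj_lt]].
  { apply (Rmult_le_reg_r L); [lra|]. field_simplify; lra. }
  set (u := fib_pair (S (S (S j)))). set (v := fib_pair (S (S j))).
  set (p1 := IZR (fst u)). set (p2 := IZR (fst v)).
  set (d1 := (1 - tau) ^ S (S (S j))). set (d2 := (1 - tau) ^ S (S j)).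
  pose proof (fib_pair_bound (S (S (S j)))) as Hp1.
  pose proof (fib_pair_bound (S (S j))) as Hp2.
  fold u p1 in Hp1. fold v p2 in Hp2.
  assert (Hp : Rabs p1 + Rabs p2 <= cover_const / L).
  { rewrite !Rabs_pos_eq by lra. eapply Rle_trans; [apply fib_pair_sum_le|].
    unfold cover_const. replace (2 * tau ^ 4 / L) with (tau ^ 4 * (2 / L)) by (field; lra).
    apply Rmult_le_compat_l; [apply pow_le; lra|exact Hj_le]. }
  assert (Hd : Rabs d1 + Rabs d2 < L / 2).
  { unfold d1, d2. rewrite one_sub_tau_pow_sum.
    replace (L / 2) with (/ (2 / L)) by (field; lra).
    apply Rinv_lt_contravar; [|exact Hj_lt].
    apply Rmult_lt_0_compat; [apply Rdiv_lt_0_compat|apply pow_lt]; lra. }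
  assert (HD : p1 * d2 - p2 * d1 <> 0).
  { replace d1 with ((1 - tau) * d2) by reflexivity.
    replace (p1 * d2 - p2 * ((1 - tau) * d2)) with (d2 * (p1 + (tau - 1) * p2)) by ring.
    apply Rmult_integral_contrapositive_currified; [apply pow_nonzero|]; nra. }
  destruct (lattice_point_near p1 p2 d1 d2 (a + L / 2) HD) as (s & t & Hn & Hs).
  set (n := (s * fst u + t * fst v)%Z). set (q := (s * snd u + t * snd v)%Z).
  assert (Happrox : IZR n - tau * IZR q = IZR s * d1 + IZR t * d2).
  { unfold n, q, d1, d2. rewrite <- !fib_pair_approx. fold u v.
    rewrite !plus_IZR, !mult_IZR. ring. }
  exists n. split.
  - apply Rle_lt_trans with (2 := Hd), Rabs_def2 in Hs.
    unfold inZ, in_arc. fold L. rewrite (modt_eq _ q); lra.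
  - unfold n. rewrite plus_IZR, !mult_IZR. fold p1 p2. lra.
Qed.

Lemma exists_min_Zabs (P : Z -> Prop) n : P n ->
  exists n0, P n0 /\ forall n', P n' -> (Z.abs n0 <= Z.abs n')%Z.
Proof.
  remember (Z.abs_nat n) as k eqn:Hk. revert n Hk.
  induction k as [k IH] using lt_wf_ind. intros n -> Hn.
  destruct (classic (exists n', P n' /\ (Z.abs n' < Z.abs n)%Z)) as [[n' [Hn' Hlt]]|Hmin].
  - exact (IH (Z.abs_nat n') ltac:(lia) n' eq_refl Hn').
  - exists n. split; [exact Hn|]. intros n' Hn'.
    apply Z.nlt_ge. intro Hlt. apply Hmin. eauto.
Qed.

Lemma inZ_exists_min a b : 0 < modt (b - a) -> ~ inZ a b 0%Z ->
  exists n0, inZ a b n0 /\ n0 <> 0%Z /\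
    (forall n, inZ a b n -> Rabs (IZR n0) <= Rabs (IZR n)) /\
    Rabs (IZR n0) * modt (b - a) <= cover_const.
Proof.
  intros HL H0.
  destruct (inZ_exists_small a b HL) as (n1 & Hn1 & Hn1_small).
  destruct (exists_min_Zabs (inZ a b) n1 Hn1) as (n0 & Hn0 & Hmin).
  assert (Hle : forall n, inZ a b n -> Rabs (IZR n0) <= Rabs (IZR n))
    by (intros n Hn; rewrite <- !abs_IZR; apply IZR_le, Hmin, Hn).
  exists n0. split; [exact Hn0|]. split; [intros ->; exact (H0 Hn0)|]. split; [exact Hle|].
  replace cover_const with (cover_const / modt (b - a) * modt (b - a)) by (field; lra).
  apply Rmult_le_compat_r; [lra|]. exact (Rle_trans _ _ _ (Hle n1 Hn1) Hn1_small).
Qed.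

Lemma inZ_spacing_ge a b m : 0 < m -> m * modt (b - a) <= cover_const ->
  forall n n', inZ a b n -> inZ a b n' -> n <> n' ->
  m / (2 * cover_const) <= Rabs (IZR (n - n')).
Proof.
  intros Hm HmL n n' Hn Hn' Hnn'.
  pose proof (inZ_spacing a b n n' Hn Hn' Hnn') as Hsp.
  set (L := modt (b - a)) in *. set (K := cover_const) in *.
  assert (HK : 0 < K).
  { unfold K, cover_const. pose proof tau_bounds.
    apply Rmult_lt_0_compat; [|apply pow_lt]; lra. }
  apply (Rmult_le_reg_r (2 * K)); [lra|].
  replace (m / (2 * K) * (2 * K)) with m by (field; lra).
  pose proof (Rabs_pos (IZR (n - n'))). nra.
Qed.

Lemma sum_n_succ (u : nat -> R) n : sum_n u (S n) = sum_n u n + u (S n).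
Proof. rewrite sum_Sn. reflexivity. Qed.

Lemma le_sum_n_nonneg (u : nat -> R) M : (forall n, 0 <= u n) -> u M <= sum_n u M.
Proof.
  intros Hu. destruct M as [|M]; [rewrite sum_O; lra|].
  rewrite sum_n_succ. enough (0 <= sum_n u M) by lra.
  induction M as [|M IH]; [rewrite sum_O; apply Hu|].
  rewrite sum_n_succ. specialize (Hu (S M)). lra.
Qed.

Lemma Series_bounded_nonneg (u : nat -> R) B :
  (forall n, 0 <= u n) -> (forall M, sum_n u M <= B) ->
  Series u <= B /\ forall M, sum_n u M <= Series u.
Proof.
  intros Hu HB.
  assert (Hincr : forall n, sum_n u n <= sum_n u (S n))
    by (intro n; rewrite sum_n_succ; specialize (Hu (S n)); lra).
  destruct (ex_finite_lim_seq_incr _ B Hincr HB) as [l Hl].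
  unfold Series. rewrite (is_lim_seq_unique _ _ Hl). simpl. split.
  - exact (is_lim_seq_le _ _ _ _ HB Hl (is_lim_seq_const B)).
  - exact (is_lim_seq_incr_compare _ _ Hl Hincr).
Qed.

Lemma div_sqr_le_inv_sub u N r : 0 < u -> 0 < r -> u <= N - r -> r / (N * N) <= / u - / N.
Proof.
  intros Hu Hr H. assert (0 < N) by lra.
  apply (Rmult_le_reg_r (u * N * N)); [apply Rmult_lt_0_compat; [apply Rmult_lt_0_compat|]; lra|].
  field_simplify; try lra. nra.
Qed.

Section SpacedSum.

Variables (P : nat -> Prop) (g : nat -> R) (m r c : R).
Hypotheses (r_pos : 0 < r) (r_lt_m : r < m) (c_ge0 : 0 <= c).
Hypothesis g_out : forall i, ~ P i -> g i = 0.
Hypothesis g_in : forall i, P i -> m <= INR (S i) /\ g i <= c / (INR (S i) * INR (S i)).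
Hypothesis P_spaced : forall i i', P i -> P i' -> (i < i')%nat -> r <= INR i' - INR i.

(* [c / N^2 <= c / r * (1 / (N - r) - 1 / N)], and the intervals [(N - r, N]] for
   the positions [N = i + 1] with [P i] are disjoint, so the sum telescopes. *)
Let telescoping_bound (M : nat) (s : R) := exists u, 0 < u /\
  r * s <= c * (/ (m - r) - / u) /\ forall i, (M <= i)%nat -> P i -> u <= INR (S i) - r.

Lemma telescoping_bound_step M s :
  telescoping_bound M s -> telescoping_bound (S M) (s + g M).
Proof.
  intros (u & Hu & Hs & Hnext).
  destruct (classic (P M)) as [HM|HM].
  - destruct (g_in M HM) as [HmM HgM].
    exists (INR (S M)). split; [lra|]. split.
    + pose proof (div_sqr_le_inv_sub u (INR (S M)) r Hu r_pos (Hnext M (Nat.le_refl M) HM)).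
      assert (r * g M <= c * (r / (INR (S M) * INR (S M)))).
      { replace (c * (r / (INR (S M) * INR (S M))))
          with (r * (c / (INR (S M) * INR (S M)))) by (field; lra).
        apply Rmult_le_compat_l; lra. }
      assert (c * (r / (INR (S M) * INR (S M))) <= c * (/ u - / INR (S M)))
        by (apply Rmult_le_compat_l; lra).
      lra.
    + intros i Hi HPi. pose proof (P_spaced M i HM HPi ltac:(lia)). rewrite !S_INR. lra.
  - rewrite (g_out M HM), Rplus_0_r. exists u. split; [exact Hu|]. split; [exact Hs|].
    intros i Hi HPi. apply Hnext; [lia|exact HPi].
Qed.

Lemma sum_n_spaced_le M : sum_n g M <= c / (r * (m - r)).
Proof.
  assert (Hbase : telescoping_bound 0 0).
  { exists (m - r). split; [lra|]. split.
    - replace (/ (m - r) - / (m - r)) with 0 by ring. lra.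
    - intros i _ HPi. destruct (g_in i HPi). lra. }
  assert (Hsum : forall N, telescoping_bound (S N) (sum_n g N)).
  { induction N as [|N IH].
    - rewrite sum_O, <- (Rplus_0_l (g 0%nat)). exact (telescoping_bound_step 0 0 Hbase).
    - rewrite sum_n_succ. exact (telescoping_bound_step (S N) _ IH). }
  destruct (Hsum M) as (u & Hu & Hs & _).
  assert (0 <= c * / u) by (apply Rmult_le_pos; [lra|apply Rlt_le, Rinv_0_lt_compat, Hu]).
  apply (Rmult_le_reg_l r); [exact r_pos|].
  replace (r * (c / (r * (m - r)))) with (c * / (m - r)) by (field; lra).
  lra.
Qed.

End SpacedSum.

Lemma termZ_in k a b n : inZ a b n -> termZ k a b n = / Rabs (IZR n) ^ k.
Proof.
  unfold inZ, in_arc, termZ. intros [H1 H2].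
  destruct (Rlt_dec 0 _); [|lra]. destruct (Rlt_dec _ _); [reflexivity|lra].
Qed.

Lemma termZ_out k a b n : ~ inZ a b n -> termZ k a b n = 0.
Proof.
  unfold inZ, in_arc, termZ. intros H.
  destruct (Rlt_dec 0 _); [|reflexivity]. destruct (Rlt_dec _ _); [|reflexivity].
  exfalso. auto.
Qed.

Lemma termZ_nonneg k a b n : 0 <= termZ k a b n.
Proof.
  destruct (classic (inZ a b n)) as [H|H]; [|rewrite termZ_out by exact H; lra].
  rewrite termZ_in by exact H.
  assert (Hpow : 0 <= Rabs (IZR n) ^ k) by (apply pow_le, Rabs_pos).
  destruct (Req_dec (Rabs (IZR n) ^ k) 0) as [->|Hnz]; [rewrite Rinv_0; lra|].
  apply Rlt_le, Rinv_0_lt_compat. lra.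
Qed.

Definition side (pos : bool) (i : nat) : Z :=
  if pos then Z.of_nat (S i) else (- Z.of_nat (S i))%Z.

Lemma side_neq0 pos i : side pos i <> 0%Z.
Proof. destruct pos; unfold side; lia. Qed.

Lemma Rabs_side pos i : Rabs (IZR (side pos i)) = INR (S i).
Proof.
  rewrite <- abs_IZR, INR_IZR_INZ. f_equal. destruct pos; unfold side; lia.
Qed.

Lemma Rabs_side_sub pos i i' : (i <= i')%nat ->
  Rabs (IZR (side pos i' - side pos i)) = INR i' - INR i.
Proof.
  intros Hii'. rewrite <- abs_IZR, !INR_IZR_INZ, <- minus_IZR. f_equal.
  destruct pos; unfold side; lia.
Qed.

Definition sumZ_term (k : nat) (a b : R) (i : nat) : R :=
  termZ k a b (side true i) + termZ k a b (side false i).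

Lemma sumZ_term_nonneg k a b i : 0 <= sumZ_term k a b i.
Proof.
  unfold sumZ_term.
  pose proof (termZ_nonneg k a b (side true i)). pose proof (termZ_nonneg k a b (side false i)).
  lra.
Qed.

Section SumZBound.

Variables (k : nat) (a b m r c : R).
Hypotheses (r_pos : 0 < r) (r_lt_m : r < m) (c_ge0 : 0 <= c).
Hypothesis inZ_ge : forall n, n <> 0%Z -> inZ a b n -> m <= Rabs (IZR n).
Hypothesis inZ_spaced :
  forall n n', inZ a b n -> inZ a b n' -> n <> n' -> r <= Rabs (IZR (n - n')).
Hypothesis inv_pow_bound : forall N, m <= N -> / N ^ k <= c / (N * N).

Lemma sumZ_partial_le M : sum_n (sumZ_term k a b) M <= 2 * (c / (r * (m - r))).
Proof.
  assert (Hside : forall pos,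
    sum_n (fun i => termZ k a b (side pos i)) M <= c / (r * (m - r))).
  { intro pos. apply (sum_n_spaced_le (fun i => inZ a b (side pos i))); try lra.
    - intros i Hi. exact (termZ_out k a b _ Hi).
    - intros i Hi. rewrite termZ_in, Rabs_side by exact Hi.
      assert (Hm : m <= INR (S i))
        by (rewrite <- (Rabs_side pos); exact (inZ_ge _ (side_neq0 pos i) Hi)).
      split; [exact Hm|]. apply inv_pow_bound, Hm.
    - intros i i' Hi Hi' Hii'. rewrite <- (Rabs_side_sub pos) by lia.
      apply inZ_spaced; [exact Hi'|exact Hi|]. destruct pos; unfold side; lia. }
  assert (E : sum_n (sumZ_term k a b) M = sum_n (fun i => termZ k a b (side true i)) M
                                        + sum_n (fun i => termZ k a b (side false i)) M)
    by exact (sum_n_plus _ _ M).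
  rewrite E. pose proof (Hside true). pose proof (Hside false). lra.
Qed.

Lemma sumZ_le : sumZ k a b <= 2 * (c / (r * (m - r))).
Proof.
  change (Series (sumZ_term k a b) <= 2 * (c / (r * (m - r)))).
  apply Series_bounded_nonneg; [apply sumZ_term_nonneg|apply sumZ_partial_le].
Qed.

End SumZBound.

Lemma inv_pow_le_inv_sqr k N : (2 <= k)%nat -> 1 <= N -> / N ^ k <= 1 / (N * N).
Proof.
  intros Hk HN. replace k with (2 + (k - 2))%nat by lia. rewrite pow_add.
  assert (1 <= N ^ (k - 2)) by (apply pow_R1_Rle; lra).
  unfold Rdiv. rewrite Rmult_1_l. apply Rinv_le_contravar; simpl; nra.
Qed.

Lemma inv_cube_le m N : 0 < m <= N -> / N ^ 3 <= / m / (N * N).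
Proof.
  intros Hm. replace (/ N ^ 3) with (/ N * / (N * N)) by (simpl; field; lra).
  unfold Rdiv. apply Rmult_le_compat_r; [apply Rlt_le, Rinv_0_lt_compat; nra|].
  apply Rinv_le_contravar; lra.
Qed.

Lemma sumZ_ge k a b n : (2 <= k)%nat -> inZ a b n -> n <> 0%Z ->
  / Rabs (IZR n) ^ k <= sumZ k a b.
Proof.
  intros Hk Hn Hn0.
  (* [Series] is junk on divergent series, so first bound the partial sums. *)
  destruct (Series_bounded_nonneg (sumZ_term k a b) (2 * (1 / (1 / 2 * (1 - 1 / 2))))
    (sumZ_term_nonneg k a b)) as [_ Hpartial].
  { apply (sumZ_partial_le k a b 1 (1 / 2) 1); try lra.
    - intros n' Hn' _. exact (Rabs_IZR_ge_1 n' Hn').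
    - intros n1 n2 _ _ H12. assert (1 <= Rabs (IZR (n1 - n2))) by (apply Rabs_IZR_ge_1; lia).
      lra.
    - intros N HN. exact (inv_pow_le_inv_sqr k N Hk HN). }
  assert (Hside : exists pos i, side pos i = n).
  { destruct n as [|p|p]; [lia| exists true | exists false];
      exists (Pos.to_nat p - 1)%nat; unfold side; lia. }
  destruct Hside as (pos & i & <-).
  change (sumZ k a b) with (Series (sumZ_term k a b)).
  eapply Rle_trans; [|apply (Hpartial i)].
  eapply Rle_trans; [|apply le_sum_n_nonneg, sumZ_term_nonneg].
  rewrite <- (termZ_in k a b _ Hn). unfold sumZ_term.
  pose proof (termZ_nonneg k a b (side true i)). pose proof (termZ_nonneg k a b (side false i)).
  destruct pos; lra.
Qed.

Lemma sumZ_le_inv_sqr k a b m K c : 1 <= K -> 0 < m -> 0 <= c ->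
  (forall n, n <> 0%Z -> inZ a b n -> m <= Rabs (IZR n)) ->
  (forall n n', inZ a b n -> inZ a b n' -> n <> n' -> m / (2 * K) <= Rabs (IZR (n - n'))) ->
  (forall N, m <= N -> / N ^ k <= c / (N * N)) ->
  sumZ k a b <= 8 * K * c / m ^ 2.
Proof.
  intros HK Hm Hc Hge Hspaced Hk.
  set (r := m / (2 * K)) in *.
  assert (Hr : 0 < r <= m / 2).
  { unfold r. split; [apply Rdiv_lt_0_compat; lra|].
    apply Rmult_le_compat_l; [lra|]. apply Rinv_le_contravar; lra. }
  assert (Hq : m * m / (4 * K) <= r * (m - r)).
  { replace (m * m / (4 * K)) with (r * (m / 2)) by (unfold r; field; lra).
    apply Rmult_le_compat_l; lra. }
  eapply Rle_trans; [apply (sumZ_le k a b m r c); auto; lra|].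
  replace (8 * K * c / m ^ 2) with (2 * (c / (m * m / (4 * K)))) by (field; lra).
  apply Rmult_le_compat_l; [lra|]. unfold Rdiv. apply Rmult_le_compat_l; [exact Hc|].
  apply Rinv_le_contravar; [apply Rdiv_lt_0_compat; nra|exact Hq].
Qed.

Lemma ratio_le_of_bounds K m S2 S3 S5 : 0 < m -> 0 <= K ->
  / m ^ 2 <= S2 -> S2 <= 8 * K * 1 / m ^ 2 -> S3 <= 8 * K * / m / m ^ 2 -> / m ^ 5 <= S5 ->
  S3 <= 64 * K * K * (S5 / S2).
Proof.
  intros Hm HK S2_ge S2_le S3_le S5_ge.
  assert (Hinv : forall j, 0 < / m ^ j) by (intro j; apply Rinv_0_lt_compat, pow_lt, Hm).
  assert (HS2 : 0 < S2) by (specialize (Hinv 2%nat); lra).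
  assert (HS3 : 0 <= 8 * K * / m / m ^ 2).
  { pose proof (Rinv_0_lt_compat m Hm). apply Rdiv_le_0_compat; [|apply pow_lt]; nra. }
  apply (Rmult_le_reg_r S2 _ _ HS2).
  replace (64 * K * K * (S5 / S2) * S2) with (64 * K * K * S5) by (field; lra).
  apply Rle_trans with ((8 * K * / m / m ^ 2) * S2); [apply Rmult_le_compat_r; lra|].
  apply Rle_trans with ((8 * K * / m / m ^ 2) * (8 * K * 1 / m ^ 2));
    [apply Rmult_le_compat_l; lra|].
  replace ((8 * K * / m / m ^ 2) * (8 * K * 1 / m ^ 2)) with (64 * K * K * / m ^ 5)
    by (field; lra).
  apply Rmult_le_compat_l; [nra|exact S5_ge].
Qed.

Theorem lemma13 :
  exists C : R, 0 < C /\
    forall a b : R, modt a <> modt b -> ~ inZ a b 0%Z ->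
      sumZ 3 a b <= C * (sumZ 5 a b / sumZ 2 a b).
Proof.
  set (K := cover_const).
  assert (HK : 1 <= K).
  { unfold K, cover_const. pose proof tau_bounds.
    assert (1 <= tau ^ 4) by (apply pow_R1_Rle; lra). lra. }
  exists (64 * K * K). split; [nra|].
  intros a b Hab H0.
  destruct (inZ_exists_min a b (modt_sub_pos a b Hab) H0) as (n0 & Hn0 & Hn0_neq0 & Hmin & HmL).
  set (m := Rabs (IZR n0)) in *.
  assert (Hm : 1 <= m) by exact (Rabs_IZR_ge_1 _ Hn0_neq0).
  pose proof (inZ_spacing_ge a b m ltac:(lra) HmL) as Hspaced.
  assert (Hge : forall n, n <> 0%Z -> inZ a b n -> m <= Rabs (IZR n)) by auto.
  apply (ratio_le_of_bounds K m); try lra.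
  - exact (sumZ_ge 2 a b n0 ltac:(lia) Hn0 Hn0_neq0).
  - apply sumZ_le_inv_sqr; auto; try lra.
    intros N HN. apply inv_pow_le_inv_sqr; [lia|lra].
  - apply sumZ_le_inv_sqr; auto; [lra|apply Rlt_le, Rinv_0_lt_compat; lra|].
    intros N HN. apply inv_cube_le. lra.
  - exact (sumZ_ge 5 a b n0 ltac:(lia) Hn0 Hn0_neq0).
Qed.
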